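(* Let $X$ be a (complete) doubling metric measure space, let $E\subset X$ be a closed set, and assume $\overline{\operatorname{co\,dim}}_A(E)<q$. Then there exists a constant $C>0$ such that \[\mathcal H^{\mu,q}_R\big(E\cap B(w,R)\big)\ge C\,R^{-q}\mu(B(w,R))\] for every $w\in E$ and all $0<R<\operatorname{diam}(E)$.
   Context: $(X,d,\mu)$ is a complete metric space with a Borel measure $\mu$ such that every closed ball $B(x,r)=\{y:d(x,y)\le r\}$, $r>0$, has $0<\mu(B(x,r))<\infty$, and $\mu$ is doubling. For $E\subset X$ and $r>0$, $E_r=\{x\in X:\operatorname{dist}(x,E)<r\}$. The upper Assouad codimension $\overline{\operatorname{co\,dim}}_A(E)$ is the infimum of all $s\ge0$ for which there is $c>0$ such that $\frac{\mu(E_r\cap B(x,R))}{\mu(B(x,R))}\ge c(r/R)^s$ for every $x\in E$ and all $0<r<R<\operatorname{diam}(E)$. For $q\ge0$ and $R>0$, the Hausdorff content of codimension $q$ is $\mathcal H_R^{\mu,q}(A)=\inf\{\sum_k\operatorname{rad}(B_k)^{-q}\mu(B_k): A\subset\bigcup_k B_k,\ \operatorname{rad}(B_k)\le R\}$, the infimum over countable covers by balls. *)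

From Stdlib Require Import Reals Lra.
Open Scope R_scope.

Section MMS.
Context {X : Type} (d : X -> X -> R).

Definition is_metric : Prop :=
  (forall x y, 0 <= d x y) /\ (forall x y, d x y = 0 <-> x = y) /\
  (forall x y, d x y = d y x) /\ (forall x y z, d x z <= d x y + d y z).

Definition complete_metric : Prop :=
  forall u : nat -> X,
    (forall eps, 0 < eps -> exists N, forall m n, (N <= m)%nat -> (N <= n)%nat ->
        d (u m) (u n) < eps) ->
    exists l, forall eps, 0 < eps -> exists N, forall n, (N <= n)%nat -> d (u n) l < eps.

Definition mm_ball (x : X) (r : R) : X -> Prop := fun y => d x y <= r.

Definition mm_open_set (U : X -> Prop) : Prop :=
  forall x, U x -> exists r, 0 < r /\ forall y, d x y < r -> U y.

Definition mm_closed_set (E : X -> Prop) : Prop :=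
  forall x, (forall r, 0 < r -> exists y, E y /\ d x y < r) -> E x.

Definition mm_bounded (A : X -> Prop) : Prop :=
  exists x0 r, forall y, A y -> d x0 y <= r.

Definition sigma_algebra (M : (X -> Prop) -> Prop) : Prop :=
  M (fun _ => True) /\
  (forall A, M A -> M (fun x => ~ A x)) /\
  (forall A : nat -> X -> Prop, (forall n, M (A n)) -> M (fun x => exists n, A n x)).

(* A Borel measure which is finite on balls, represented by its (real) values
   on mm_bounded measurable sets; M is a sigma-algebra containing the Borel sets. *)
Definition locally_finite_borel_measure (M : (X -> Prop) -> Prop)
  (mu : (X -> Prop) -> R) : Prop :=
  sigma_algebra M /\
  (forall U, mm_open_set U -> M U) /\
  mu (fun _ => False) = 0 /\
  (forall A, M A -> mm_bounded A -> 0 <= mu A) /\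
  (forall A : nat -> X -> Prop,
     (forall n, M (A n)) ->
     (forall m n x, m <> n -> A m x -> A n x -> False) ->
     mm_bounded (fun x => exists n, A n x) ->
     infinite_sum (fun n => mu (A n)) (mu (fun x => exists n, A n x))).

Definition balls_positive (mu : (X -> Prop) -> R) : Prop :=
  forall x r, 0 < r -> 0 < mu (mm_ball x r).

Definition doubling (mu : (X -> Prop) -> R) : Prop :=
  exists Cd, forall x r, 0 < r -> mu (mm_ball x (2 * r)) <= Cd * mu (mm_ball x r).

(* R < diam(E)  (diam E = sup of d over E x E, possibly +infinity) *)
Definition lt_diam (R0 : R) (E : X -> Prop) : Prop :=
  exists x y, E x /\ E y /\ R0 < d x y.

Definition nbhd (E : X -> Prop) (r : R) : X -> Prop :=
  fun x => exists y, E y /\ d x y < r.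

Definition inter (A B : X -> Prop) : X -> Prop := fun x => A x /\ B x.

Definition assouad_codim_admissible (mu : (X -> Prop) -> R) (E : X -> Prop) (s : R) : Prop :=
  0 <= s /\
  exists c, 0 < c /\
    forall x r R0, E x -> 0 < r -> r < R0 -> lt_diam R0 E ->
      mu (inter (nbhd E r) (mm_ball x R0)) / mu (mm_ball x R0) >= c * Rpower (r / R0) s.

(* upper Assouad codimension of E (an infimum) is < q *)
Definition upper_assouad_codim_lt (mu : (X -> Prop) -> R) (E : X -> Prop) (q : R) : Prop :=
  exists s, assouad_codim_admissible mu E s /\ s < q.

(* Countable covers by balls: a sequence of (center, radius) pairs, where
   None stands for "no mm_ball" (so finite covers are included). *)
Definition cover_term (mu : (X -> Prop) -> R) (q : R) (b : option (X * R)) : R :=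
  match b with
  | None => 0
  | Some (c, r) => Rpower r (- q) * mu (mm_ball c r)
  end.

(* H^{mu,q}_R(A) >= V, i.e. every admissible cover has sum >= V
   (a divergent sum of nonnegative terms counts as +infinity >= V). *)
Definition hcontent_ge (mu : (X -> Prop) -> R) (q R0 : R) (A : X -> Prop) (V : R) : Prop :=
  forall cov : nat -> option (X * R),
    (forall k c r, cov k = Some (c, r) -> 0 < r /\ r <= R0) ->
    (forall y, A y -> exists k c r, cov k = Some (c, r) /\ d c y <= r) ->
    forall l, infinite_sum (fun k => cover_term mu q (cov k)) l -> V <= l.

End MMS.

From Stdlib Require Import Reals Lra Lia Classical ClassicalEpsilon FunctionalExtensionality PropExtensionality.
Open Scope R_scope.

(* Call [B(w, R)] deficient for a cover when the cover balls meeting it have radius at most [R]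
   and their terms [r^-q μ(B(c, r))] add up to less than [C R^-q μ(B(w, R))]; a cover with a small
   sum makes [B(w, R)] deficient.  Fix a small factor [δ] and put [t = δ R].  By the Assouad bound,
   [μ(E_t ∩ B(w, R/4))] is at least comparable to [δ^s μ(B(w, R))]; by doubling, the cover balls of
   radius [> t] meeting [B(w, R)] carry at most half of it.  The rest lies in the 5-fold
   enlargements of a maximal [4 t]-separated net of points of [E] away from those large balls, so
   the disjoint balls [B(p, t)] of the net have total measure [≳ δ^s μ(B(w, R))].  A cover ball
   meeting some [B(p, t)] has radius at most [t], hence meets no other one; as [δ^(s-q)] is large,
   pigeonholing the cover sum over the net gives a deficient ball [B(p, t)] with [d(w, p) <= R/2].
   Iterating yields a Cauchy sequence whose limit lies in the closed set [E], yet in no ball of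
   positive radius of the cover. *)

(* [psum f n] is [f 0 + ... + f (n - 1)], with [n] terms; Stdlib's [sum_f_R0 f n] has [n + 1]. *)
Fixpoint psum (f : nat -> R) (n : nat) : R :=
  match n with O => 0 | S n' => psum f n' + f n' end.

Lemma psum_S_sum_f_R0 (f : nat -> R) n : psum f (S n) = sum_f_R0 f n.
Proof. induction n as [|n IH]; simpl in *; [lra|]. rewrite <- IH; simpl; lra. Qed.

Lemma psum_le f g n : (forall k, (k < n)%nat -> f k <= g k) -> psum f n <= psum g n.
Proof.
  induction n as [|n IH]; intros H; simpl; [lra|].
  assert (H1 := IH ltac:(intros; apply H; lia)). assert (H2 := H n ltac:(lia)). lra.
Qed.

Lemma psum_ext f g n : (forall k, (k < n)%nat -> f k = g k) -> psum f n = psum g n.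
Proof. intros H; apply Rle_antisym; apply psum_le; intros k Hk; rewrite H by lia; lra. Qed.

Lemma psum_le_n f n m : (forall k, 0 <= f k) -> (n <= m)%nat -> psum f n <= psum f m.
Proof. intros H Hnm; induction Hnm; simpl; [lra|]. specialize (H m); lra. Qed.

Lemma psum_plus f g n : psum (fun k => f k + g k) n = psum f n + psum g n.
Proof. induction n; simpl; lra. Qed.

Lemma psum_scal a f n : psum (fun k => a * f k) n = a * psum f n.
Proof. induction n as [|n IH]; simpl; [lra|]. rewrite IH; ring. Qed.

Lemma psum_const a n : psum (fun _ => a) n = INR n * a.
Proof. induction n as [|n IH]; simpl psum; [simpl; lra|]. rewrite IH, S_INR; ring. Qed.

Lemma psum_zero f n : (forall k, (k < n)%nat -> f k = 0) -> psum f n = 0.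
Proof. intros H; rewrite (psum_ext f (fun _ => 0)) by auto. rewrite psum_const; lra. Qed.

Lemma psum_swap (f : nat -> nat -> R) n m :
  psum (fun i => psum (fun k => f i k) m) n = psum (fun k => psum (fun i => f i k) n) m.
Proof.
  induction n as [|n IH]; simpl.
  - rewrite psum_zero; auto.
  - rewrite IH, <- psum_plus. reflexivity.
Qed.

Lemma psum_le_single h v m : 0 <= v ->
  (forall i, (i < m)%nat -> h i <= v) ->
  (forall i j, (i < m)%nat -> (j < m)%nat -> h i <> 0 -> h j <> 0 -> i = j) ->
  psum h m <= v.
Proof.
  intros Hv. induction m as [|m IH]; intros Hle Huniq; simpl; [lra|].
  destruct (Req_dec (h m) 0) as [Hz|Hnz].
  - rewrite Hz. assert (psum h m <= v); [|lra].
    apply IH; intros; [apply Hle|apply Huniq]; auto; lia.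
  - rewrite psum_zero.
    + assert (h m <= v) by (apply Hle; lia). lra.
    + intros k Hk. destruct (Req_dec (h k) 0) as [|Hk0]; auto.
      assert (k = m) by (apply Huniq; auto; lia). lia.
Qed.

Lemma psum_le_infinite_sum f l n :
  (forall k, 0 <= f k) -> infinite_sum f l -> psum f n <= l.
Proof.
  intros Hpos Hl. apply Rnot_lt_le; intros Hlt.
  destruct (Hl (psum f n - l)) as [N HN]; [lra|].
  specialize (HN (max n N) ltac:(lia)). unfold Rdist in HN.
  rewrite <- psum_S_sum_f_R0 in HN. apply Rabs_def2 in HN.
  assert (psum f n <= psum f (S (max n N))) by (apply psum_le_n; auto; lia). lra.
Qed.

Lemma infinite_sum_le f l b : infinite_sum f l -> (forall n, psum f n <= b) -> l <= b.
Proof.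
  intros Hl Hb. apply Rnot_lt_le; intros Hlt.
  destruct (Hl (l - b)) as [N HN]; [lra|].
  specialize (HN N (le_n N)). unfold Rdist in HN.
  rewrite <- psum_S_sum_f_R0 in HN. apply Rabs_def2 in HN.
  specialize (Hb (S N)). lra.
Qed.

Lemma infinite_sum_finite f m :
  (forall k, (m <= k)%nat -> f k = 0) -> infinite_sum f (psum f m).
Proof.
  intros H eps Heps. exists m. intros n Hn. unfold Rdist. rewrite <- psum_S_sum_f_R0.
  assert (Hk : forall k, psum f (m + k) = psum f m).
  { induction k as [|k IH]; [now rewrite Nat.add_0_r|].
    replace (m + S k)%nat with (S (m + k)) by lia. simpl. rewrite H by lia. lra. }
  replace (S n) with (m + (S n - m))%nat by lia. rewrite Hk.
  unfold Rminus. rewrite Rplus_opp_r, Rabs_R0. exact Heps.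
Qed.

Lemma psum_pigeonhole m (g : nat -> nat -> R) (b : nat -> R) b0 :
  (forall i N N', (N <= N')%nat -> g i N <= g i N') ->
  (forall N, psum (fun i => g i N) m <= b0) ->
  b0 < psum b m ->
  exists i, (i < m)%nat /\ exists b', b' < b i /\ forall N, g i N <= b'.
Proof.
  intros Hmono Hsum Hlt. apply NNPP; intros Hno.
  set (eta := (psum b m - b0) / (INR m + 1)).
  assert (Hm1 : 0 < INR m + 1) by (pose proof (pos_INR m); lra).
  assert (Heta : 0 < eta) by (apply Rdiv_lt_0_compat; lra).
  assert (Hall : forall m', (m' <= m)%nat ->
            exists N, forall i, (i < m')%nat -> b i - eta < g i N).
  { induction m' as [|m' IH]; intros Hm'.
    - exists O; intros; lia.
    - destruct (IH ltac:(lia)) as [N HN].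
      assert (exists N', b m' - eta < g m' N') as [N' HN'].
      { apply NNPP; intros Hn. apply Hno. exists m'; split; [lia|].
        exists (b m' - eta); split; [lra|]. intros N0.
        apply Rnot_lt_le; intros Hc; apply Hn; eauto. }
      exists (max N N'). intros i Hi.
      destruct (Nat.eq_dec i m') as [->|Hne].
      + eapply Rlt_le_trans; [exact HN'|apply Hmono; lia].
      + eapply Rlt_le_trans; [apply HN; lia|apply Hmono; lia]. }
  destruct (Hall m (le_n m)) as [N HN].
  assert (H1 : psum (fun i => b i + - eta) m <= psum (fun i => g i N) m)
    by (apply psum_le; intros; left; apply HN; auto).
  rewrite psum_plus, psum_const in H1.
  assert (H2 : INR m * eta < psum b m - b0).
  { unfold eta. apply (Rmult_lt_reg_r (INR m + 1)); auto. field_simplify; lra. }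
  specialize (Hsum N). lra.
Qed.

Lemma bounded_nat_has_max (P : nat -> Prop) B : P O -> (forall m, P m -> (m <= B)%nat) ->
  exists m, P m /\ forall m', P m' -> (m' <= m)%nat.
Proof.
  intros H0 HB.
  assert (Hk : forall k m, P m -> (B - m <= k)%nat ->
            exists m0, P m0 /\ forall m', P m' -> (m' <= m0)%nat).
  { induction k as [|k IH]; intros m Pm Hk.
    - exists m; split; auto. intros m' Pm'. specialize (HB m' Pm'). lia.
    - destruct (classic (forall m', P m' -> (m' <= m)%nat)) as [Hy|Hn]; [eauto|].
      apply not_all_ex_not in Hn as [m' Hm']. apply imply_to_and in Hm' as [Pm' Hlt].
      apply (IH m'); auto. specialize (HB m' Pm'). lia. }
  apply (Hk B O H0). lia.
Qed.

Lemma set_ext {X : Type} (A B : X -> Prop) : (forall x, A x <-> B x) -> A = B.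
Proof.
  intros H; apply functional_extensionality; intros x.
  apply propositional_extensionality; auto.
Qed.

Lemma exists_pow2_ge x r : 0 < r -> exists j, x <= 2 ^ j * r.
Proof.
  intros Hr. destruct (INR_unbounded (x / r)) as [j Hj]. exists j.
  assert (Hpow : INR j <= 2 ^ j).
  { clear Hj. induction j as [|j IH]; [simpl; lra|].
    rewrite S_INR. simpl. assert (1 <= 2 ^ j) by (apply pow_R1_Rle; lra). lra. }
  apply (Rmult_le_reg_r (/ r)); [apply Rinv_0_lt_compat; auto|].
  replace (2 ^ j * r * / r) with (2 ^ j) by (field; lra). unfold Rdiv in Hj. lra.
Qed.

Lemma pow_eventually_lt δ y : 0 <= δ < 1 -> 0 < y -> exists N, forall n, (N <= n)%nat -> δ ^ n < y.
Proof.
  intros Hδ Hy. destruct (pow_lt_1_zero δ ltac:(rewrite Rabs_right; lra) y Hy) as [N HN].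
  exists N. intros n Hn. specialize (HN n Hn).
  rewrite Rabs_right in HN; [exact HN|]. apply Rle_ge, pow_le; lra.
Qed.

Lemma pow_le_pow_le1 δ m n : 0 <= δ <= 1 -> (m <= n)%nat -> δ ^ n <= δ ^ m.
Proof.
  intros Hδ Hmn. replace n with (m + (n - m))%nat by lia. rewrite pow_add.
  assert (δ ^ (n - m) <= 1) by (rewrite <- (pow1 (n - m)); apply pow_incr; lra).
  assert (0 <= δ ^ m) by (apply pow_le; lra). nra.
Qed.

Lemma sequence_by_choice {X : Type} (P : nat -> X -> Prop) (Q : nat -> X -> X -> Prop) x0 :
  P O x0 -> (forall n x, P n x -> exists x', Q n x x' /\ P (S n) x') ->
  exists u : nat -> X, u O = x0 /\ forall n, P n (u n) /\ Q n (u n) (u (S n)).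
Proof.
  intros H0 Hstep.
  set (next := fun n x => epsilon (inhabits x0) (fun x' => Q n x x' /\ P (S n) x')).
  set (u := fun n => nat_rect (fun _ => X) x0 next n).
  assert (Hnext : forall n, P n (u n) -> Q n (u n) (u (S n)) /\ P (S n) (u (S n)))
    by (intros n Hn; exact (epsilon_spec (inhabits x0) _ (Hstep n (u n) Hn))).
  assert (HP : forall n, P n (u n)) by (induction n; [exact H0|apply Hnext; auto]).
  exists u. split; [reflexivity|]. intros n. split; [auto|apply Hnext; auto].
Qed.

Lemma Rpower_pos x y : 0 < Rpower x y.
Proof. unfold Rpower; apply exp_pos. Qed.

Lemma Rpower_opp_ratio_ge1 r R0 q : 0 < r <= R0 -> 0 <= q -> 1 <= Rpower R0 q * Rpower r (- q).
Proof.
  intros Hr Hq. rewrite Rpower_Ropp.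
  assert (Rpower r q <= Rpower R0 q) by (apply Rle_Rpower_l; lra).
  pose proof (Rpower_pos r q).
  apply (Rmult_le_reg_r (Rpower r q)); [lra|]. field_simplify; lra.
Qed.

Section MetricMeasure.
Variables (X : Type) (d : X -> X -> R) (M : (X -> Prop) -> Prop) (mu : (X -> Prop) -> R).
Hypothesis Hmet : is_metric d.
Hypothesis Hmu : locally_finite_borel_measure d M mu.

Lemma mm_bounded_sub (A B : X -> Prop) :
  (forall x, A x -> B x) -> mm_bounded d B -> mm_bounded d A.
Proof. intros H [x0 [r Hr]]; exists x0, r; auto. Qed.

Lemma mm_bounded_ball x r : mm_bounded d (mm_ball d x r).
Proof. exists x, r; unfold mm_ball; auto. Qed.

Lemma M_ext A B : (forall x, A x <-> B x) -> M A -> M B.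
Proof. intros H HA. rewrite <- (set_ext A B H). exact HA. Qed.

Lemma M_compl A : M A -> M (fun x => ~ A x).
Proof. destruct Hmu as [[_ [H _]] _]; auto. Qed.

Lemma M_countable_union (A : nat -> X -> Prop) :
  (forall n, M (A n)) -> M (fun x => exists n, A n x).
Proof. destruct Hmu as [[_ [_ H]] _]; auto. Qed.

Lemma M_empty : M (fun _ => False).
Proof.
  destruct Hmu as [[HT _] _].
  apply (M_ext (fun x => ~ True)); [tauto|]. apply M_compl, HT.
Qed.

Lemma M_union A B : M A -> M B -> M (fun x => A x \/ B x).
Proof.
  intros HA HB.
  apply (M_ext (fun x => exists n, (match n with O => A | _ => B end) x)).
  - intros x; split; [intros [[|n] H]; auto|intros [H|H]; [exists O|exists 1%nat]; auto].
  - apply M_countable_union. intros [|n]; auto.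
Qed.

Lemma M_inter A B : M A -> M B -> M (fun x => A x /\ B x).
Proof.
  intros HA HB. apply (M_ext (fun x => ~ (~ A x \/ ~ B x))); [intros; tauto|].
  apply M_compl, M_union; apply M_compl; auto.
Qed.

Lemma M_diff A B : M A -> M B -> M (fun x => A x /\ ~ B x).
Proof. intros HA HB. apply M_inter, M_compl; auto. Qed.

Lemma M_guard (P : Prop) A : M A -> M (fun x => P /\ A x).
Proof.
  intros HA. destruct (classic P) as [HP|HP].
  - apply (M_ext A); [intros; tauto|auto].
  - apply (M_ext (fun _ => False)); [intros; tauto|apply M_empty].
Qed.

Lemma M_finite_union (B : nat -> X -> Prop) m :
  (forall i, M (B i)) -> M (fun x => exists i, (i < m)%nat /\ B i x).
Proof. intros HB. apply M_countable_union. intros i. apply M_guard, HB. Qed.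

Lemma M_open U : mm_open_set d U -> M U.
Proof. destruct Hmu as [_ [H _]]; auto. Qed.

Lemma M_ball x r : M (mm_ball d x r).
Proof.
  destruct Hmet as [_ [_ [Hsym Htri]]].
  apply (M_ext (fun y => ~ r < d x y)); [intros y; unfold mm_ball; lra|].
  apply M_compl, M_open. intros z Hz. exists (d x z - r). split; [lra|].
  intros y Hy. specialize (Htri x y z). rewrite (Hsym y z) in Htri. lra.
Qed.

Lemma M_nbhd E r : M (nbhd d E r).
Proof.
  destruct Hmet as [_ [_ [Hsym Htri]]].
  apply M_open. intros z [y [Ey Hzy]]. exists (r - d z y). split; [lra|].
  intros u Hu. exists y. split; auto.
  specialize (Htri u z y). rewrite (Hsym u z) in Htri. lra.
Qed.

Lemma mu_empty : mu (fun _ => False) = 0.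
Proof. destruct Hmu as [_ [_ [H _]]]; auto. Qed.

Lemma mu_nonneg A : M A -> mm_bounded d A -> 0 <= mu A.
Proof. destruct Hmu as [_ [_ [_ [H _]]]]; auto. Qed.

Lemma mu_ext A B : (forall x, A x <-> B x) -> mu A = mu B.
Proof. intros H; rewrite (set_ext A B H); auto. Qed.

Lemma mu_union_disjoint A B : M A -> M B -> (forall x, A x -> B x -> False) ->
  mm_bounded d (fun x => A x \/ B x) -> mu (fun x => A x \/ B x) = mu A + mu B.
Proof.
  intros HA HB Hdis Hbd. destruct Hmu as [_ [_ [_ [_ Hadd]]]].
  set (F := fun n : nat => match n with O => A | 1%nat => B | _ => fun _ : X => False end).
  assert (HU : (fun x => A x \/ B x) = (fun x => exists n, F n x)).
  { apply set_ext; intros x; split.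
    - intros [H|H]; [exists O | exists 1%nat]; auto.
    - intros [[|[|n]] H]; simpl in H; tauto. }
  rewrite HU in *.
  assert (H1 := Hadd F ltac:(intros [|[|n]]; simpl; auto using M_empty)
     ltac:(intros [|[|m]] [|[|n]] x Hmn; simpl; try tauto; intros; eauto; lia) Hbd).
  assert (H2 : infinite_sum (fun n => mu (F n)) (psum (fun n => mu (F n)) 2)).
  { apply infinite_sum_finite. intros [|[|k]] Hk; try lia. apply mu_empty. }
  rewrite (uniqueness_sum _ _ _ H1 H2). simpl. lra.
Qed.

Lemma mu_union_diff A B : M A -> M B -> mm_bounded d (fun x => A x \/ B x) ->
  mu (fun x => A x \/ B x) = mu A + mu (fun x => B x /\ ~ A x).
Proof.
  intros HA HB Hbd.
  rewrite (mu_ext _ (fun x => A x \/ (B x /\ ~ A x))) by (intros; tauto).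
  apply mu_union_disjoint; auto using M_diff; [tauto|].
  eapply mm_bounded_sub; [|exact Hbd]; intros x; tauto.
Qed.

Lemma mu_mono A B : M A -> M B -> mm_bounded d B -> (forall x, A x -> B x) -> mu A <= mu B.
Proof.
  intros HA HB Hbd Hsub.
  rewrite (mu_ext B (fun x => A x \/ B x)) by (intros x; split; auto; intros [H|H]; auto).
  rewrite mu_union_diff; auto.
  - assert (0 <= mu (fun x => B x /\ ~ A x)); [|lra].
    apply mu_nonneg; [apply M_diff; auto|apply (mm_bounded_sub _ B); [tauto|auto]].
  - apply (mm_bounded_sub _ B); auto. intros x [H|H]; auto.
Qed.

Lemma mu_union_le A B : M A -> M B -> mm_bounded d (fun x => A x \/ B x) ->
  mu (fun x => A x \/ B x) <= mu A + mu B.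
Proof.
  intros HA HB Hbd. rewrite mu_union_diff; auto.
  assert (mu (fun x => B x /\ ~ A x) <= mu B); [|lra].
  apply mu_mono; [apply M_diff; auto|auto| |tauto].
  apply (mm_bounded_sub _ (fun x => A x \/ B x)); auto.
Qed.

Lemma finite_union_S (B : nat -> X -> Prop) m x :
  (exists i, (i < S m)%nat /\ B i x) <-> (exists i, (i < m)%nat /\ B i x) \/ B m x.
Proof.
  split.
  - intros [i [Hi Hx]]. destruct (Nat.eq_dec i m) as [->|Hne]; auto.
    left; exists i; split; auto; lia.
  - intros [[i [Hi Hx]]|Hx]; [exists i; split; auto; lia|exists m; split; auto].
Qed.

Lemma mu_finite_union_le (B : nat -> X -> Prop) m : (forall i, M (B i)) ->
  mm_bounded d (fun x => exists i, (i < m)%nat /\ B i x) ->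
  mu (fun x => exists i, (i < m)%nat /\ B i x) <= psum (fun i => mu (B i)) m.
Proof.
  intros HB. induction m as [|m IH]; intros Hbd; simpl.
  - rewrite (mu_ext _ (fun _ => False)), mu_empty; [lra|].
    intros x; split; [intros [i [Hi _]]; lia|tauto].
  - rewrite (set_ext _ _ (finite_union_S B m)) in Hbd |- *.
    assert (Hbd' : mm_bounded d (fun x => exists i, (i < m)%nat /\ B i x))
      by (eapply mm_bounded_sub; [|exact Hbd]; intros; tauto).
    eapply Rle_trans; [apply mu_union_le; auto using M_finite_union|].
    specialize (IH Hbd'). lra.
Qed.

Lemma mu_finite_union_disjoint (B : nat -> X -> Prop) m : (forall i, M (B i)) ->
  (forall i j x, (i < m)%nat -> (j < m)%nat -> i <> j -> B i x -> B j x -> False) ->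
  mm_bounded d (fun x => exists i, (i < m)%nat /\ B i x) ->
  mu (fun x => exists i, (i < m)%nat /\ B i x) = psum (fun i => mu (B i)) m.
Proof.
  intros HB. induction m as [|m IH]; intros Hdis Hbd; simpl.
  - rewrite (mu_ext _ (fun _ => False)), mu_empty; [lra|].
    intros x; split; [intros [i [Hi _]]; lia|tauto].
  - rewrite (set_ext _ _ (finite_union_S B m)) in Hbd |- *.
    assert (Hbd' : mm_bounded d (fun x => exists i, (i < m)%nat /\ B i x))
      by (eapply mm_bounded_sub; [|exact Hbd]; intros; tauto).
    rewrite mu_union_disjoint, IH; auto using M_finite_union.
    + intros i j x Hi Hj; apply Hdis; lia.
    + intros x [i [Hi Hx]] Hm. apply (Hdis i m x); auto; lia.
Qed.

(* Countable subadditivity, through the disjoint pieces [A n \ (A 0 u ... u A (n-1))]. *)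
Lemma mu_countable_union_le (A : nat -> X -> Prop) b : (forall n, M (A n)) ->
  mm_bounded d (fun x => exists n, A n x) ->
  (forall N, psum (fun n => mu (A n)) N <= b) ->
  mu (fun x => exists n, A n x) <= b.
Proof.
  intros HA Hbd Hb. destruct Hmu as [_ [_ [_ [_ Hadd]]]].
  set (D := fun n x => A n x /\ ~ (exists i, (i < n)%nat /\ A i x)).
  assert (HD : forall n, M (D n)) by (intros n; apply M_diff; auto using M_finite_union).
  assert (HU : forall x, (exists n, A n x) <-> (exists n, D n x)).
  { intros x; split; [|intros [n [Hn _]]; eauto].
    intros [n Hn]. induction n as [n IH] using (well_founded_induction Wf_nat.lt_wf).
    destruct (classic (exists i, (i < n)%nat /\ A i x)) as [[i [Hi Ai]]|Hno].
    - exact (IH i Hi Ai).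
    - exists n; split; auto. }
  assert (HbdD : mm_bounded d (fun x => exists n, D n x))
    by (eapply mm_bounded_sub; [|exact Hbd]; intros x; apply HU).
  assert (Hs := Hadd D HD ltac:(intros m n x Hmn [Hm Hm'] [Hn Hn'];
      destruct (Nat.lt_total m n) as [H|[H|H]]; [apply Hn'; eauto|auto|apply Hm'; eauto]) HbdD).
  rewrite (mu_ext _ _ HU). apply (infinite_sum_le _ _ _ Hs). intros N.
  eapply Rle_trans; [|apply (Hb N)]. apply psum_le. intros k _. apply mu_mono; auto.
  - eapply mm_bounded_sub; [|exact Hbd]. intros x Hx; exists k; exact Hx.
  - intros x [H _]; exact H.
Qed.

(* Steps of size [δ ^ n * ρ / 2] with [δ <= 1/2] sum to at most [δ ^ n * ρ] from index [n] on. *)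
Lemma geometric_sequence_converges (Hcomp : complete_metric d) (u : nat -> X) δ ρ :
  0 <= δ <= 1 / 2 -> 0 < ρ ->
  (forall n, d (u n) (u (S n)) <= δ ^ n * ρ / 2) ->
  exists l, (forall n, d (u n) l <= δ ^ n * ρ) /\
    forall eps, 0 < eps -> exists N, forall n, (N <= n)%nat -> d (u n) l < eps.
Proof.
  intros Hδ Hρ Hstep. destruct Hmet as [_ [Hd1 [Hsym Htri]]].
  assert (Hpow : forall n, 0 <= δ ^ n) by (intros; apply pow_le; lra).
  assert (Htail : forall k n, d (u n) (u (n + k)%nat) <= δ ^ n * ρ).
  { induction k as [|k IH]; intros n.
    - rewrite Nat.add_0_r, (proj2 (Hd1 _ _) eq_refl). specialize (Hpow n). nra.
    - replace (n + S k)%nat with (S n + k)%nat by lia.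
      specialize (IH (S n)). change (δ ^ S n) with (δ * δ ^ n) in IH. rewrite Rmult_assoc in IH.
      specialize (Hstep n). specialize (Hpow n).
      assert (δ * (δ ^ n * ρ) <= 1 / 2 * (δ ^ n * ρ)) by (apply Rmult_le_compat_r; nra).
      pose proof (Htri (u n) (u (S n)) (u (S n + k)%nat)). lra. }
  assert (Hcauchy : forall N m n, (N <= m)%nat -> (N <= n)%nat -> d (u m) (u n) <= δ ^ N * ρ).
  { intros N m n Hm Hn.
    assert (Hmn : forall a b, (N <= a)%nat -> (a <= b)%nat -> d (u a) (u b) <= δ ^ N * ρ).
    { intros a b Ha Hab. replace b with (a + (b - a))%nat by lia.
      eapply Rle_trans; [apply Htail|]. apply Rmult_le_compat_r; [lra|].
      apply pow_le_pow_le1; [lra|auto]. }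
    destruct (Nat.le_ge_cases m n); [auto|rewrite Hsym; auto]. }
  assert (Hsmall : forall eps, 0 < eps -> exists N, δ ^ N * ρ < eps).
  { intros eps Heps. destruct (pow_eventually_lt δ (eps / ρ)) as [N HN];
      [lra|apply Rdiv_lt_0_compat; auto|].
    exists N. specialize (HN N (le_n N)). apply (Rmult_lt_compat_r ρ) in HN; auto.
    replace (eps / ρ * ρ) with eps in HN by (field; lra). exact HN. }
  destruct (Hcomp u) as [l Hl].
  { intros eps Heps. destruct (Hsmall eps Heps) as [N HN].
    exists N. intros m n Hm Hn. eapply Rle_lt_trans; [apply (Hcauchy N); auto|exact HN]. }
  exists l. split; [|exact Hl]. intros n. apply Rnot_lt_le; intros Hlt.
  destruct (Hl (d (u n) l - δ ^ n * ρ)) as [N HN]; [lra|].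
  specialize (HN (max n N) ltac:(lia)).
  pose proof (Htri (u n) (u (max n N)) l).
  pose proof (Hcauchy n n (max n N) (le_n n) ltac:(lia)). lra.
Qed.

Lemma mu_ball_nonneg x r : 0 <= mu (mm_ball d x r).
Proof. apply mu_nonneg; auto using M_ball, mm_bounded_ball. Qed.

Lemma mu_ball_mono x r r' : r <= r' -> mu (mm_ball d x r) <= mu (mm_ball d x r').
Proof. intros H. apply mu_mono; auto using M_ball, mm_bounded_ball. unfold mm_ball; intros; lra. Qed.

Section Doubling.
Hypothesis Hpos : balls_positive d mu.
Variable D : R.
Hypothesis HD1 : 1 <= D.
Hypothesis HD : forall x r, 0 < r -> mu (mm_ball d x (2 * r)) <= D * mu (mm_ball d x r).

Lemma mu_ball_le_pow x r r' j : 0 < r -> r' <= 2 ^ j * r ->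
  mu (mm_ball d x r') <= D ^ j * mu (mm_ball d x r).
Proof.
  intros Hr Hr'. eapply Rle_trans; [apply mu_ball_mono, Hr'|]. clear Hr'.
  induction j as [|j IH]; simpl; [rewrite !Rmult_1_l; lra|].
  assert (0 < 2 ^ j * r) by (apply Rmult_lt_0_compat; auto; apply pow_lt; lra).
  rewrite !Rmult_assoc. eapply Rle_trans; [apply HD; auto|].
  apply Rmult_le_compat_l; [lra|auto].
Qed.

(* The balls [B(p i, ρ)] are disjoint, lie in [B(w, 2 r)], and each has measure at least
   [D ^ -j μ(B(w, 2 r))] where [3 r <= 2 ^ j ρ]. *)
Lemma separated_family_bounded (w : X) r ρ : 0 < ρ <= r ->
  exists B : nat, forall m (p : nat -> X),
    (forall i, (i < m)%nat -> d w (p i) <= r) ->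
    (forall i i', (i < m)%nat -> (i' < m)%nat -> i <> i' -> 2 * ρ < d (p i) (p i')) ->
    (m <= B)%nat.
Proof.
  intros Hρ. destruct Hmet as [_ [_ [Hsym Htri]]].
  destruct (exists_pow2_ge (3 * r) ρ) as [j Hj]; [lra|].
  destruct (INR_unbounded (D ^ j)) as [B HB]. exists B. intros m p Hin Hsep.
  set (V := mu (mm_ball d w (2 * r))).
  assert (HV : 0 < V) by (apply Hpos; lra).
  assert (Hunion : mu (fun x => exists i, (i < m)%nat /\ mm_ball d (p i) ρ x) <= V).
  { apply mu_mono; auto using M_ball, mm_bounded_ball, M_finite_union.
    intros y [i [Hi Hy]]. specialize (Hin i Hi). unfold mm_ball in *.
    specialize (Htri w (p i) y). lra. }
  rewrite mu_finite_union_disjoint in Hunion; auto using M_ball.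
  2:{ intros i i' y Hi Hi' Hne Hy Hy'. specialize (Hsep i i' Hi Hi' Hne). unfold mm_ball in *.
      specialize (Htri (p i) y (p i')). rewrite (Hsym y (p i')) in Htri. lra. }
  2:{ apply (mm_bounded_sub _ (mm_ball d w (2 * r))); [|apply mm_bounded_ball].
      intros y [i [Hi Hy]]. specialize (Hin i Hi). unfold mm_ball in *.
      specialize (Htri w (p i) y). lra. }
  assert (Hlow : psum (fun _ => V) m <= D ^ j * psum (fun i => mu (mm_ball d (p i) ρ)) m).
  { rewrite <- psum_scal. apply psum_le. intros i Hi. specialize (Hin i Hi).
    eapply Rle_trans; [|apply (mu_ball_le_pow (p i) ρ (3 * r) j); lra].
    apply mu_mono; auto using M_ball, mm_bounded_ball. unfold mm_ball. intros y Hy.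
    specialize (Htri (p i) w y). rewrite (Hsym (p i) w) in Htri. lra. }
  rewrite psum_const in Hlow.
  assert (Hsum : psum (fun i => mu (mm_ball d (p i) ρ)) m <= V) by exact Hunion.
  assert (HDj : 0 < D ^ j) by (apply pow_lt; lra).
  assert (Hm : INR m * V <= D ^ j * V) by nra.
  assert (Hlt : INR m < INR B) by nra. apply INR_lt in Hlt. lia.
Qed.

Lemma maximal_separated_net (F : X -> Prop) (w : X) r ρ : 0 < ρ <= r ->
  (forall e, F e -> d w e <= r) ->
  exists m (p : nat -> X),
    (forall i, (i < m)%nat -> F (p i)) /\
    (forall i i', (i < m)%nat -> (i' < m)%nat -> i <> i' -> 2 * ρ < d (p i) (p i')) /\
    (forall e, F e -> exists i, (i < m)%nat /\ d (p i) e <= 2 * ρ).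
Proof.
  intros Hρ HF. destruct Hmet as [_ [_ [Hsym _]]].
  set (separated m := exists p : nat -> X, (forall i, (i < m)%nat -> F (p i)) /\
    (forall i i', (i < m)%nat -> (i' < m)%nat -> i <> i' -> 2 * ρ < d (p i) (p i'))).
  destruct (separated_family_bounded w r ρ Hρ) as [B HB].
  destruct (bounded_nat_has_max separated B) as [m [[p [HpF Hsep]] Hmax]].
  - exists (fun _ => w). split; intros; lia.
  - intros m [p [HpF Hsep]]. apply (HB m p); auto.
  - exists m, p. split; [auto|split; [auto|]].
    intros e Fe. apply NNPP; intros Hno.
    assert (Hext : separated (S m)).
    { exists (fun i => if Nat.eq_dec i m then e else p i). split.
      - intros i Hi. destruct (Nat.eq_dec i m); auto. apply HpF; lia.
      - intros i i' Hi Hi' Hne.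
        destruct (Nat.eq_dec i m), (Nat.eq_dec i' m); subst; try lia.
        + apply Rnot_le_lt. intros Hc. apply Hno. exists i'. split; [lia|]. rewrite Hsym; auto.
        + apply Rnot_le_lt. intros Hc. apply Hno. exists i. split; [lia|]. auto.
        + apply Hsep; lia. }
    apply Hmax in Hext. lia.
Qed.

Section Cover.
Variables (E : X -> Prop) (q s c δ : R) (cov : nat -> option (X * R)).
Hypothesis Hs0 : 0 <= s.
Hypothesis Hsq : s < q.
Hypothesis Hc : 0 < c.
Hypothesis Hassouad : forall x r R0, E x -> 0 < r -> r < R0 -> lt_diam d R0 E ->
  mu (inter (nbhd d E r) (mm_ball d x R0)) / mu (mm_ball d x R0) >= c * Rpower (r / R0) s.
Hypothesis Hδ : 0 < δ <= 1 / 8.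
Hypothesis Hδ_small : 2 * D ^ 5 / c <= Rpower δ (s - q).

Definition meets (x : X) (ρ : R) (b : option (X * R)) : Prop :=
  match b with None => False | Some (c0, r) => exists y, d x y <= ρ /\ d c0 y <= r end.

Definition term k := cover_term d mu q (cov k).

Definition local_term x ρ k := if excluded_middle_informative (meets x ρ (cov k)) then term k else 0.

(* [D ^ 4] makes the large cover balls carry at most half of the mass given by the Assouad bound. *)
Definition deficiency_const := c * Rpower δ s / (2 * D ^ 4).

(* The sum of the local terms is bounded through its partial sums, so no convergence is needed. *)
Definition deficient x ρ := E x /\ 0 < ρ /\ lt_diam d ρ E /\
  (forall k c0 r, cov k = Some (c0, r) -> meets x ρ (Some (c0, r)) -> r <= ρ) /\
  exists b, b < deficiency_const * Rpower ρ (- q) * mu (mm_ball d x ρ) /\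
    forall N, psum (local_term x ρ) N <= b.

Lemma term_nonneg k : 0 <= term k.
Proof.
  unfold term, cover_term. destruct (cov k) as [[c0 r]|]; [|lra].
  apply Rmult_le_pos; [left; apply Rpower_pos|apply mu_ball_nonneg].
Qed.

Lemma local_term_nonneg x ρ k : 0 <= local_term x ρ k.
Proof. unfold local_term. destruct (excluded_middle_informative _); [apply term_nonneg|lra]. Qed.

Lemma local_term_le x ρ k : local_term x ρ k <= term k.
Proof. unfold local_term. destruct (excluded_middle_informative _); [lra|apply term_nonneg]. Qed.

Lemma deficiency_const_pos : 0 < deficiency_const.
Proof.
  apply Rdiv_lt_0_compat; [apply Rmult_lt_0_compat; auto; apply Rpower_pos|].
  assert (0 < D ^ 4) by (apply pow_lt; lra). lra.
Qed.

Lemma lt_diam_le R1 R2 : R1 <= R2 -> lt_diam d R2 E -> lt_diam d R1 E.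
Proof. intros H [x [y [Hx [Hy Hxy]]]]. exists x, y. repeat split; auto. lra. Qed.

Lemma scale_gain R0 : 0 < R0 ->
  Rpower R0 (- q) <= Rpower (δ * R0) (- q) * (c * Rpower δ s / (2 * D ^ 5)).
Proof.
  intros HR0. rewrite <- Rpower_mult_distr by lra.
  assert (Hs : Rpower δ s = Rpower δ (s - q) * Rpower δ q)
    by (rewrite <- Rpower_plus; f_equal; ring).
  assert (Hδq : Rpower δ (- q) * Rpower δ q = 1)
    by (rewrite <- Rpower_plus, Rplus_opp_l; apply Rpower_O; lra).
  assert (HD5 : 0 < 2 * D ^ 5) by (assert (0 < D ^ 5) by (apply pow_lt; lra); lra).
  assert (Hgain : Rpower δ q <= c * Rpower δ s / (2 * D ^ 5)).
  { rewrite Hs. pose proof (Rpower_pos δ q).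
    assert (Hmul : 2 * D ^ 5 / c * Rpower δ q <= Rpower δ (s - q) * Rpower δ q)
      by (apply Rmult_le_compat_r; lra).
    replace (c * (Rpower δ (s - q) * Rpower δ q) / (2 * D ^ 5))
      with (c / (2 * D ^ 5) * (Rpower δ (s - q) * Rpower δ q)) by (field; lra).
    replace (Rpower δ q) with (c / (2 * D ^ 5) * (2 * D ^ 5 / c * Rpower δ q)) at 1
      by (field; lra).
    apply Rmult_le_compat_l; [apply Rlt_le, Rdiv_lt_0_compat; lra|exact Hmul]. }
  transitivity (Rpower δ (- q) * Rpower R0 (- q) * Rpower δ q).
  - right. rewrite (Rmult_comm (Rpower δ (- q))), Rmult_assoc, Hδq. ring.
  - apply Rmult_le_compat_l; [|exact Hgain].
    apply Rmult_le_pos; left; apply Rpower_pos.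
Qed.

Section Step.
Variables (w : X) (R0 b : R).
Hypothesis Ew : E w.
Hypothesis HR0 : 0 < R0.
Hypothesis Hdiam : lt_diam d R0 E.
Hypothesis Hrad : forall k c0 r, cov k = Some (c0, r) -> meets w R0 (Some (c0, r)) -> r <= R0.
Hypothesis Hb : forall N, psum (local_term w R0) N <= b.

Let t := δ * R0.

Lemma t_bounds : 0 < t <= R0 / 8.
Proof. unfold t; split; nra. Qed.

Definition big_ball k : X -> Prop :=
  match cov k with
  | None => fun _ => False
  | Some (c0, r) => fun y => (meets w R0 (Some (c0, r)) /\ t < r) /\ mm_ball d c0 (3 * r) y
  end.

Definition far_from_big_balls e := forall k c0 r, cov k = Some (c0, r) ->
  meets w R0 (Some (c0, r)) -> t < r -> 2 * r < d c0 e.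

Lemma M_big_ball k : M (big_ball k).
Proof.
  unfold big_ball. destruct (cov k) as [[c0 r]|]; [apply M_guard, M_ball|apply M_empty].
Qed.

Lemma big_ball_in_ball k y : big_ball k y -> d w y <= 5 * R0.
Proof.
  destruct Hmet as [_ [_ [Hsym Htri]]]. unfold big_ball.
  destruct (cov k) as [[c0 r]|] eqn:Hck; [|contradiction].
  intros [[[z [Hz1 Hz2]] Htr] Hy]. unfold mm_ball in Hy.
  specialize (Hrad k c0 r Hck (ex_intro _ z (conj Hz1 Hz2))).
  pose proof (Htri w z y). pose proof (Htri z c0 y). rewrite (Hsym z c0) in *. lra.
Qed.

Lemma mu_big_ball_le k : mu (big_ball k) <= D ^ 2 * Rpower R0 q * local_term w R0 k.
Proof.
  assert (HDq : 0 <= D ^ 2 * Rpower R0 q)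
    by (apply Rmult_le_pos; [apply pow_le; lra|left; apply Rpower_pos]).
  assert (Hloc := local_term_nonneg w R0 k).
  unfold big_ball. destruct (cov k) as [[c0 r]|] eqn:Hck; [|rewrite mu_empty; nra].
  destruct (classic (meets w R0 (Some (c0, r)) /\ t < r)) as [[Hmeet Htr]|Hsmall].
  2:{ rewrite (mu_ext _ (fun _ => False)), mu_empty by (intros y; tauto). nra. }
  rewrite (mu_ext _ (mm_ball d c0 (3 * r))) by (intros y; tauto).
  unfold local_term, term. rewrite Hck.
  destruct (excluded_middle_informative _) as [_|]; [|contradiction]. cbn [cover_term].
  assert (Hr : 0 < r) by (pose proof t_bounds; lra).
  assert (Hratio := Rpower_opp_ratio_ge1 r R0 q (conj Hr (Hrad k c0 r Hck Hmeet)) ltac:(lra)).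
  assert (Hdbl : mu (mm_ball d c0 (3 * r)) <= D ^ 2 * mu (mm_ball d c0 r))
    by (apply mu_ball_le_pow; [lra|simpl; lra]).
  assert (0 <= D ^ 2 * mu (mm_ball d c0 r))
    by (apply Rmult_le_pos; [apply pow_le; lra|apply mu_ball_nonneg]).
  replace (D ^ 2 * Rpower R0 q * (Rpower r (- q) * mu (mm_ball d c0 r)))
    with (D ^ 2 * mu (mm_ball d c0 r) * (Rpower R0 q * Rpower r (- q))) by ring.
  nra.
Qed.

Lemma mu_big_balls_le :
  mu (fun y => exists k, big_ball k y) <= D ^ 2 * Rpower R0 q * b.
Proof.
  apply mu_countable_union_le; [apply M_big_ball| |].
  - apply (mm_bounded_sub _ (mm_ball d w (5 * R0))); [|apply mm_bounded_ball].
    intros y [k Hk]. exact (big_ball_in_ball k y Hk).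
  - intros N. eapply Rle_trans; [apply psum_le; intros k _; apply mu_big_ball_le|].
    rewrite psum_scal. apply Rmult_le_compat_l; [|apply Hb].
    apply Rmult_le_pos; [apply pow_le; lra|left; apply Rpower_pos].
Qed.

Lemma assouad_mass_lower :
  c * Rpower δ s * mu (mm_ball d w R0) / D ^ 2 <= mu (inter (nbhd d E t) (mm_ball d w (R0 / 4))).
Proof.
  pose proof t_bounds.
  assert (HA4 : 0 < mu (mm_ball d w (R0 / 4))) by (apply Hpos; lra).
  assert (Hratio := Hassouad w t (R0 / 4) Ew ltac:(lra) ltac:(lra) (lt_diam_le (R0 / 4) R0 ltac:(lra) Hdiam)).
  apply Rge_le in Hratio.
  apply (Rmult_le_compat_r (mu (mm_ball d w (R0 / 4)))) in Hratio; [|lra].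
  replace (mu (inter (nbhd d E t) (mm_ball d w (R0 / 4))) / mu (mm_ball d w (R0 / 4))
           * mu (mm_ball d w (R0 / 4))) with (mu (inter (nbhd d E t) (mm_ball d w (R0 / 4))))
    in Hratio by (field; lra).
  assert (Hpow : Rpower δ s <= Rpower (t / (R0 / 4)) s).
  { apply Rle_Rpower_l; [lra|]. unfold t. replace (δ * R0 / (R0 / 4)) with (4 * δ) by (field; lra). lra. }
  assert (Hdbl : mu (mm_ball d w R0) <= D ^ 2 * mu (mm_ball d w (R0 / 4)))
    by (apply mu_ball_le_pow; [lra|simpl; lra]).
  assert (HD2 : 0 < D ^ 2) by (apply pow_lt; lra).
  pose proof (Rpower_pos δ s).
  apply (Rmult_le_reg_l (D ^ 2)); [lra|]. field_simplify; [|lra].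
  apply Rle_trans with (c * Rpower δ s * (D ^ 2 * mu (mm_ball d w (R0 / 4)))).
  - apply Rmult_le_compat_l; [nra|lra].
  - replace (c * Rpower δ s * (D ^ 2 * mu (mm_ball d w (R0 / 4))))
      with (D ^ 2 * (c * Rpower δ s * mu (mm_ball d w (R0 / 4)))) by ring.
    apply Rmult_le_compat_l; [lra|]. eapply Rle_trans; [|exact Hratio].
    apply Rmult_le_compat_r; [lra|]. apply Rmult_le_compat_l; lra.
Qed.

Variables (m : nat) (p : nat -> X).
Hypothesis Hnet_in : forall i, (i < m)%nat -> E (p i) /\ d w (p i) <= R0 / 2 /\ far_from_big_balls (p i).
Hypothesis Hnet_sep : forall i i', (i < m)%nat -> (i' < m)%nat -> i <> i' -> 4 * t < d (p i) (p i').
Hypothesis Hnet_cover : forall e, E e -> d w e <= R0 / 2 -> far_from_big_balls e ->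
  exists i, (i < m)%nat /\ d (p i) e <= 4 * t.

Lemma net_ball_meets i k c0 r : (i < m)%nat -> cov k = Some (c0, r) ->
  meets (p i) t (Some (c0, r)) -> meets w R0 (Some (c0, r)) /\ r <= t.
Proof.
  intros Hi Hk [z [Hz1 Hz2]]. destruct Hmet as [_ [_ [Hsym Htri]]].
  destruct (Hnet_in i Hi) as [_ [Hwp Hfar]]. pose proof t_bounds.
  assert (Hmeet : meets w R0 (Some (c0, r))).
  { exists z; split; auto. specialize (Htri w (p i) z). lra. }
  split; auto. apply Rnot_lt_le; intros Htr.
  specialize (Hfar k c0 r Hk Hmeet Htr). specialize (Htri c0 z (p i)).
  rewrite (Hsym z (p i)) in Htri. lra.
Qed.

Lemma nbhd_covered y : inter (nbhd d E t) (mm_ball d w (R0 / 4)) y ->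
  (exists i, (i < m)%nat /\ mm_ball d (p i) (5 * t) y) \/ (exists k, big_ball k y).
Proof.
  intros [[e [Ee Hye]] Hwy]. unfold mm_ball in *. destruct Hmet as [_ [_ [Hsym Htri]]].
  pose proof t_bounds.
  assert (Hwe : d w e <= R0 / 2) by (specialize (Htri w y e); lra).
  destruct (classic (exists k, big_ball k y)) as [Hbig|Hnbig]; [right; exact Hbig|left].
  assert (Hfar : far_from_big_balls e).
  { intros k c0 r Hk Hmeet Htr. apply Rnot_le_lt; intros Hle. apply Hnbig. exists k.
    unfold big_ball. rewrite Hk. split; [split; auto|]. unfold mm_ball.
    specialize (Htri c0 e y). rewrite (Hsym e y) in Htri. lra. }
  destruct (Hnet_cover e Ee Hwe Hfar) as [i [Hi Hpe]]. exists i; split; auto.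
  specialize (Htri (p i) e y). rewrite (Hsym e y) in Htri. lra.
Qed.

Lemma mu_net_balls_le :
  mu (fun y => exists i, (i < m)%nat /\ mm_ball d (p i) (5 * t) y)
  <= D ^ 3 * psum (fun i => mu (mm_ball d (p i) t)) m.
Proof.
  destruct Hmet as [_ [_ [_ Htri]]]. pose proof t_bounds.
  eapply Rle_trans; [apply mu_finite_union_le; [intros; apply M_ball|]|].
  - apply (mm_bounded_sub _ (mm_ball d w (2 * R0))); [|apply mm_bounded_ball].
    intros y [i [Hi Hy]]. destruct (Hnet_in i Hi) as [_ [Hwp _]]. unfold mm_ball in *.
    specialize (Htri w (p i) y). lra.
  - rewrite <- psum_scal. apply psum_le. intros i _.
    apply mu_ball_le_pow; [lra|simpl; lra].
Qed.

Lemma mu_assouad_set_le :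
  mu (inter (nbhd d E t) (mm_ball d w (R0 / 4)))
  <= D ^ 3 * psum (fun i => mu (mm_ball d (p i) t)) m + D ^ 2 * Rpower R0 q * b.
Proof.
  set (UL := fun y => exists i, (i < m)%nat /\ mm_ball d (p i) (5 * t) y).
  set (UA := fun y => exists k, big_ball k y).
  pose proof t_bounds. destruct Hmet as [_ [_ [_ Htri]]].
  assert (Hbnd : mm_bounded d (fun y => UL y \/ UA y)).
  { apply (mm_bounded_sub _ (mm_ball d w (5 * R0))); [|apply mm_bounded_ball].
    intros y [[i [Hi Hy]]|[k Hk]]; [|exact (big_ball_in_ball k y Hk)].
    destruct (Hnet_in i Hi) as [_ [Hwp _]]. unfold mm_ball in *.
    specialize (Htri w (p i) y). lra. }
  assert (MUL : M UL) by (apply M_finite_union; intros; apply M_ball).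
  assert (MUA : M UA) by (apply M_countable_union, M_big_ball).
  eapply Rle_trans; [apply (mu_mono _ (fun y => UL y \/ UA y))|].
  - apply M_inter; [apply M_nbhd|apply M_ball].
  - apply M_union; auto.
  - exact Hbnd.
  - exact nbhd_covered.
  - eapply Rle_trans; [apply mu_union_le; auto|].
    pose proof mu_net_balls_le. pose proof mu_big_balls_le. unfold UL, UA. lra.
Qed.

Hypothesis Hdef : b < deficiency_const * Rpower R0 (- q) * mu (mm_ball d w R0).

Lemma net_mass_large :
  c * Rpower δ s / (2 * D ^ 5) * mu (mm_ball d w R0) < psum (fun i => mu (mm_ball d (p i) t)) m.
Proof.
  set (A := mu (mm_ball d w R0)). set (S := psum (fun i => mu (mm_ball d (p i) t)) m).
  set (a := c * Rpower δ s).
  assert (HG := mu_assouad_set_le). assert (HGA := assouad_mass_lower). fold A S a in HG, HGA.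
  assert (HD2 : 0 < D ^ 2) by (apply pow_lt; lra).
  assert (HD3 : 0 < D ^ 3) by (apply pow_lt; lra).
  assert (Hsmall : D ^ 2 * Rpower R0 q * b < a * A / (2 * D ^ 2)).
  { assert (HRq : 0 < D ^ 2 * Rpower R0 q) by (apply Rmult_lt_0_compat; [lra|apply Rpower_pos]).
    apply (Rmult_lt_compat_l _ _ _ HRq) in Hdef. eapply Rlt_le_trans; [exact Hdef|].
    right. unfold deficiency_const. fold a A.
    assert (Hinv : Rpower R0 q * Rpower R0 (- q) = 1)
      by (rewrite <- Rpower_plus, Rplus_opp_r; apply Rpower_O; lra).
    replace (D ^ 2 * Rpower R0 q * (a / (2 * D ^ 4) * Rpower R0 (- q) * A))
      with (D ^ 2 * (a / (2 * D ^ 4)) * A * (Rpower R0 q * Rpower R0 (- q))) by ring.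
    rewrite Hinv. field. lra. }
  assert (Hmain : a * A / (2 * D ^ 2) < D ^ 3 * S).
  { assert (a * A / D ^ 2 = 2 * (a * A / (2 * D ^ 2))) by (field; lra). lra. }
  replace (c * Rpower δ s / (2 * D ^ 5) * A) with (a * A / (2 * D ^ 2) / D ^ 3)
    by (unfold a; field; lra).
  apply (Rmult_lt_reg_l (D ^ 3)); [lra|]. field_simplify; lra.
Qed.

(* Net points are [4 t]-separated, and a cover ball meeting [B(p i, t)] has radius at most [t];
   so each cover ball meets at most one of the [B(p i, t)]. *)
Lemma local_sums_disjoint N :
  psum (fun i => psum (local_term (p i) t) N) m <= psum (local_term w R0) N.
Proof.
  destruct Hmet as [_ [_ [Hsym Htri]]].
  rewrite (psum_swap (fun i k => local_term (p i) t k)). apply psum_le. intros k _.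
  destruct (classic (meets w R0 (cov k))) as [Hw|Hnw].
  - assert (Hwk : local_term w R0 k = term k)
      by (unfold local_term; destruct (excluded_middle_informative _); tauto).
    rewrite Hwk. apply psum_le_single; [apply term_nonneg|intros; apply local_term_le|].
    intros i i2 Hi Hi2 Hni Hnj. unfold local_term in Hni, Hnj.
    destruct (excluded_middle_informative _) as [Ri|]; [|lra].
    destruct (excluded_middle_informative _) as [Rj|]; [|lra].
    destruct (Nat.eq_dec i i2) as [|Hne]; auto. exfalso.
    destruct (cov k) as [[c0 r]|] eqn:Hck; [|contradiction].
    destruct (net_ball_meets i k c0 r Hi Hck Ri) as [_ Hrt].
    destruct Ri as [z1 [Hz1 Hz1']], Rj as [z2 [Hz2 Hz2']].
    specialize (Hnet_sep i i2 Hi Hi2 Hne).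
    pose proof (Htri (p i) z1 (p i2)). pose proof (Htri z1 c0 (p i2)). pose proof (Htri c0 z2 (p i2)).
    rewrite (Hsym z1 c0), (Hsym z2 (p i2)) in *. lra.
  - rewrite psum_zero; [apply local_term_nonneg|]. intros i Hi. unfold local_term.
    destruct (excluded_middle_informative _) as [Ri|]; auto. exfalso.
    destruct (cov k) as [[c0 r]|] eqn:Hck; [|contradiction].
    apply Hnw. exact (proj1 (net_ball_meets i k c0 r Hi Hck Ri)).
Qed.

Lemma deficient_at_net_point : exists i, (i < m)%nat /\ deficient (p i) t.
Proof.
  pose proof t_bounds.
  assert (Hlarge : b < psum (fun i => deficiency_const * Rpower t (- q) * mu (mm_ball d (p i) t)) m).
  { rewrite psum_scal. eapply Rlt_le_trans; [exact Hdef|].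
    assert (Hgain := scale_gain R0 HR0). fold t in Hgain.
    assert (Hmass := net_mass_large).
    pose proof deficiency_const_pos. pose proof (Rpower_pos t (- q)).
    pose proof (mu_ball_nonneg w R0).
    rewrite !Rmult_assoc. apply Rmult_le_compat_l; [lra|].
    apply Rle_trans with (Rpower t (- q) * (c * Rpower δ s / (2 * D ^ 5)) * mu (mm_ball d w R0)).
    - apply Rmult_le_compat_r; lra.
    - rewrite Rmult_assoc. apply Rmult_le_compat_l; lra. }
  destruct (psum_pigeonhole m (fun i N => psum (local_term (p i) t) N)
      (fun i => deficiency_const * Rpower t (- q) * mu (mm_ball d (p i) t)) b)
    as [i [Hi [b' [Hb' HN]]]].
  - intros i N N' HNN'. apply psum_le_n; [apply local_term_nonneg|exact HNN'].
  - intros N. eapply Rle_trans; [apply local_sums_disjoint|apply Hb].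
  - exact Hlarge.
  - exists i. split; [exact Hi|]. destruct (Hnet_in i Hi) as [Ei _].
    split; [exact Ei|split; [lra|split; [apply (lt_diam_le t R0); [lra|exact Hdiam]|split]]].
    + intros k c0 r Hk Hmeet. exact (proj2 (net_ball_meets i k c0 r Hi Hk Hmeet)).
    + exists b'. split; [exact Hb'|exact HN].
Qed.

End Step.

Lemma deficient_step w R0 : deficient w R0 -> exists w', d w w' <= R0 / 2 /\ deficient w' (δ * R0).
Proof.
  intros [Ew [HR0 [Hdiam [Hrad [b [Hdef Hb]]]]]].
  destruct (maximal_separated_net
              (fun e => E e /\ d w e <= R0 / 2 /\ far_from_big_balls w R0 e) w (R0 / 2) (2 * (δ * R0)))
    as [m [p [Hin [Hsep Hcover]]]]; [split; nra|intros e [_ [He _]]; exact He|].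
  destruct (deficient_at_net_point w R0 b Ew HR0 Hdiam Hrad Hb m p Hin) as [i [Hi Hdefi]].
  - intros i i' Hi Hi' Hne. specialize (Hsep i i' Hi Hi' Hne). lra.
  - intros e Ee Hwe Hfar. destruct (Hcover e (conj Ee (conj Hwe Hfar))) as [i [Hi Hie]].
    exists i. split; [exact Hi|lra].
  - exact Hdef.
  - exists (p i). split; [exact (proj1 (proj2 (Hin i Hi)))|exact Hdefi].
Qed.

Lemma no_deficient_point (Hcomp : complete_metric d) (HE : mm_closed_set d E) w R0 :
  (forall k c0 r, cov k = Some (c0, r) -> 0 < r) ->
  (forall y, inter (mm_ball d w R0) E y -> exists k c0 r, cov k = Some (c0, r) /\ d c0 y <= r) ->
  ~ deficient w R0.
Proof.
  intros Hcov_pos Hcovers Hw.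
  destruct Hmet as [_ [_ [Hsym _]]].
  assert (HR0 : 0 < R0) by (destruct Hw as [_ [H _]]; exact H).
  assert (Hstep : forall n x, deficient x (δ ^ n * R0) ->
            exists x', d x x' <= δ ^ n * R0 / 2 /\ deficient x' (δ ^ S n * R0)).
  { intros n x Hx. destruct (deficient_step x _ Hx) as [x' [Hxx' Hx']].
    exists x'. split; [exact Hxx'|]. simpl. rewrite Rmult_assoc. exact Hx'. }
  assert (Hw0 : deficient w (δ ^ 0 * R0)) by (simpl; rewrite Rmult_1_l; exact Hw).
  destruct (sequence_by_choice _ _ w Hw0 Hstep) as [u [Hu0 Hu]].
  destruct (geometric_sequence_converges Hcomp u δ R0) as [l [Hul Hlim]];
    [lra|exact HR0|intros n; exact (proj2 (Hu n))|].
  assert (El : E l).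
  { apply HE. intros r Hr. destruct (Hlim r Hr) as [N HN]. exists (u N).
    split; [exact (proj1 (proj1 (Hu N)))|rewrite Hsym; apply HN; lia]. }
  assert (Hwl : mm_ball d w R0 l)
    by (specialize (Hul O); rewrite Hu0 in Hul; simpl in Hul; unfold mm_ball; lra).
  destruct (Hcovers l (conj Hwl El)) as [k [c0 [r [Hk Hc0l]]]].
  assert (Hr := Hcov_pos k c0 r Hk).
  destruct (pow_eventually_lt δ (r / R0)) as [N HN]; [lra|apply Rdiv_lt_0_compat; lra|].
  specialize (HN N (le_n N)).
  destruct (proj1 (Hu N)) as [_ [_ [_ [Hrad _]]]].
  specialize (Hrad k c0 r Hk (ex_intro _ l (conj (Hul N) Hc0l))).
  apply (Rmult_lt_compat_r R0) in HN; [|exact HR0].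
  replace (r / R0 * R0) with r in HN by (field; lra). lra.
Qed.

Lemma cover_sum_ge (Hcomp : complete_metric d) (HE : mm_closed_set d E) w R0 l :
  E w -> 0 < R0 -> lt_diam d R0 E ->
  (forall k c0 r, cov k = Some (c0, r) -> 0 < r /\ r <= R0) ->
  (forall y, inter (mm_ball d w R0) E y -> exists k c0 r, cov k = Some (c0, r) /\ d c0 y <= r) ->
  infinite_sum term l ->
  deficiency_const * Rpower R0 (- q) * mu (mm_ball d w R0) <= l.
Proof.
  intros Ew HR0 Hdiam Hcov Hcovers Hl. apply Rnot_lt_le; intros Hlt.
  apply (no_deficient_point Hcomp HE w R0); [intros k c0 r Hk; apply (Hcov k c0 r Hk)|exact Hcovers|].
  split; [exact Ew|split; [exact HR0|split; [exact Hdiam|split]]].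
  - intros k c0 r Hk _. exact (proj2 (Hcov k c0 r Hk)).
  - exists l. split; [exact Hlt|]. intros N.
    eapply Rle_trans; [apply psum_le; intros k _; apply local_term_le|].
    apply psum_le_infinite_sum; [apply term_nonneg|exact Hl].
Qed.

End Cover.
End Doubling.
End MetricMeasure.

Lemma exists_small_scale s q A : s < q -> 0 < A ->
  exists δ, 0 < δ <= 1 / 8 /\ A <= Rpower δ (s - q).
Proof.
  intros Hsq HA. set (δ0 := Rpower A (/ (s - q))).
  assert (Hδ0 : 0 < δ0) by apply Rpower_pos.
  exists (Rmin (1 / 8) δ0).
  assert (Hpos : 0 < Rmin (1 / 8) δ0) by (apply Rmin_pos; lra).
  split; [split; [exact Hpos|apply Rmin_l]|].
  assert (Hδ0q : Rpower δ0 (q - s) = / A).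
  { unfold δ0. rewrite Rpower_mult.
    replace (/ (s - q) * (q - s)) with (Ropp 1) by (field; lra).
    rewrite Rpower_Ropp, Rpower_1 by exact HA. reflexivity. }
  assert (Hle : Rpower (Rmin (1 / 8) δ0) (q - s) <= / A).
  { rewrite <- Hδ0q. apply Rle_Rpower_l; [lra|split; [exact Hpos|apply Rmin_r]]. }
  replace (s - q) with (- (q - s)) by ring. rewrite Rpower_Ropp.
  rewrite <- (Rinv_inv A) at 1. apply Rinv_le_contravar; [apply Rpower_pos|exact Hle].
Qed.

Theorem lemma5p1 (X : Type) (d : X -> X -> R)
  (M : (X -> Prop) -> Prop) (mu : (X -> Prop) -> R)
  (Hmet : is_metric d) (Hcomp : complete_metric d)
  (Hmu : locally_finite_borel_measure d M mu)
  (Hpos : balls_positive d mu) (Hdbl : doubling d mu)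
  (E : X -> Prop) (HE : mm_closed_set d E) (q : R)
  (Hq : upper_assouad_codim_lt d mu E q) :
  exists C, 0 < C /\
    forall w R0, E w -> 0 < R0 -> lt_diam d R0 E ->
      hcontent_ge d mu q R0 (inter (mm_ball d w R0) E)
        (C * Rpower R0 (- q) * mu (mm_ball d w R0)).
Proof.
  destruct Hq as [s [[Hs0 [c [Hc Hassouad]]] Hsq]].
  destruct Hdbl as [D0 HD0].
  set (D := Rmax 1 D0).
  assert (HD1 : 1 <= D) by apply Rmax_l.
  assert (HD : forall x r, 0 < r -> mu (mm_ball d x (2 * r)) <= D * mu (mm_ball d x r)).
  { intros x r Hr. eapply Rle_trans; [apply HD0, Hr|].
    apply Rmult_le_compat_r; [apply (mu_ball_nonneg X d M mu Hmet Hmu)|apply Rmax_r]. }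
  assert (HD5 : 0 < 2 * D ^ 5 / c)
    by (apply Rdiv_lt_0_compat; [assert (0 < D ^ 5) by (apply pow_lt; lra); lra|exact Hc]).
  destruct (exists_small_scale s q _ Hsq HD5) as [δ [Hδ Hδ_small]].
  exists (deficiency_const D s c δ). split; [apply deficiency_const_pos; auto|].
  intros w R0 Ew HR0 Hdiam cov Hcov Hcovers l Hl.
  eapply cover_sum_ge; eauto.
Qed.
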